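(* Let $H$ be a finite group of odd order with $d(H)=2$. Then $\mathsf{GEN}(\mathbb{Z}_2^2\times H)=*1$.
   Context: For a finite group $G$, $\mathsf{GEN}(G)$ is the following impartial two-player game. A position is a set of elements selected so far; the starting position is $\emptyset$. From a position $P$ with $\langle P\rangle\neq G$, the player to move selects some $g\in G\setminus P$, producing the position $P\cup\{g\}$ (these are the options of $P$); a position $P$ with $\langle P\rangle = G$ has no options. The nim-number of a position is defined recursively by $\operatorname{nim}(P)=\operatorname{mex}\{\operatorname{nim}(Q): Q \text{ an option of } P\}$, where $\operatorname{mex}(A)$ is the least nonnegative integer not in $A$. We write $\mathsf{GEN}(G)=*n$ if $\operatorname{nim}(\emptyset)=n$. $d(G)$ denotes the minimum size of a generating set of $G$; $\mathbb{Z}_2^2=\mathbb{Z}_2\times\mathbb{Z}_2$. *)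

From HB Require Import structures.
From mathcomp Require Import all_boot all_order all_algebra all_fingroup all_solvable.
Set Implicit Arguments. Unset Strict Implicit. Unset Printing Implicit Defensive.
Import GroupScope.

(* mex s = least natural number not occurring in s
   (it is always <= size s, so searching [0 .. size s] suffices). *)
Definition mex (s : seq nat) : nat :=
  find (fun n => n \notin s) (iota 0 (size s).+1).

Section Gen.
Variables (gT : finGroupType) (G : {group gT}).

Fixpoint gen_nim_fuel (n : nat) (P : {set gT}) : nat :=
  match n with
  | 0 => 0
  | n'.+1 =>
      if (<<P>> : {set gT}) == (G : {set gT}) then 0
      else mex [seq gen_nim_fuel n' (g |: P) | g in G :\: P]
  end.

(* Every play of GEN(G) has at most #|G| moves, so fuel #|G|.+1 computes
   the exact nim-number of the starting position (the empty set). *)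
Definition GEN_nim : nat := gen_nim_fuel #|G|.+1 set0.

Definition dgen : nat :=
  #|[arg min_(A < (G : {set gT}) | (A \subset G) && ((<<A>> : {set gT}) == G)) #|A|]|.
End Gen.

Definition Z2sq : {group ('Z_2 * 'Z_2)%type} := [set: ('Z_2 * 'Z_2)%type]%G.

From mathcomp Require Import all_boot all_order all_algebra all_fingroup all_solvable.
Set Implicit Arguments.
Unset Strict Implicit.
Unset Printing Implicit Defensive.
Import GroupScope.

(* Since #|Z_2^2| = 4 is coprime to #|H|, a set P generates Z_2^2 x H exactly
   when its two projections generate the factors.  The value min(nim P, 2) of a
   position P of GEN(Z_2^2 x H) is then determined by three invariants: whether
   the Z_2^2-projection of P is trivial, the parity of #|P|, and whether the
   H-projection of P is at most one element away from generating H.  Given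
   generators x, y of H, the options (1, x) and (v, 1) show that this table
   satisfies the mex recursion, and at the empty position it reads 1. *)

Definition mex2 (b0 b1 : bool) : nat := if b0 then (if b1 then 2 else 1)%N else 0%N.

Lemma minn_mex2 (s : seq nat) : minn (mex s) 2 = mex2 (0%N \in s) (1%N \in s).
Proof.
rewrite /mex /mex2; case s0: (0 \in s); last by rewrite /= s0.
have: 0 < size s by case: s s0.
by case: (size s) => // m _ /=; rewrite s0 /=; case: (1%N \in s).
Qed.

Section TruncatedNim.
Variables (gT : finGroupType) (G : {group gT}) (f : {set gT} -> nat).

Definition has_option (P : {set gT}) (k : nat) := [exists g in G :\: P, f (g |: P) == k].

Lemma has_option_witness (P : {set gT}) g k :
  g \in G :\: P -> f (g |: P) = k -> has_option P k.
Proof. by move=> gP fk; apply/existsP; exists g; rewrite gP fk /=. Qed.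

Hypothesis f_gen : forall P : {set gT}, <<P>> = G -> f P = 0%N.
Hypothesis f_mex : forall P : {set gT}, P \subset G -> <<P>> != G ->
  f P = mex2 (has_option P 0) (has_option P 1).

Lemma gen_nim_fuel_min2 (n : nat) (P : {set gT}) :
  P \subset G -> #|G :\: P| < n -> minn (gen_nim_fuel G n P) 2 = f P.
Proof.
elim: n P => [|n IHn] P sPG //= ltPn.
case: eqP => [/f_gen -> //| /eqP nPG].
have IHg g : g \in G :\: P -> minn (gen_nim_fuel G n (g |: P)) 2 = f (g |: P).
  move=> gP; have /setDP[gG _] := gP; apply: IHn; first by rewrite subUset sub1set gG.
  rewrite -ltnS (leq_trans _ ltPn) // ltnS proper_card // properEneq setDS ?subsetUr //.
  by rewrite andbT; apply: contraTneq gP => <-; rewrite !inE eqxx.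
have memE k : k <= 1 ->
    (k \in [seq gen_nim_fuel G n (g |: P) | g in G :\: P]) = has_option P k.
  move=> le_k1; apply/mapP/existsP => [[g gP Ek]|[g /andP[gP /eqP fk]]].
    rewrite mem_enum in gP; exists g; rewrite gP -IHg //= -Ek.
    by apply/eqP/minn_idPl; exact: leq_trans le_k1 _.
  exists g; first by rewrite mem_enum.
  move: (IHg g gP); rewrite fk /minn; case: ltnP => [_ -> //|_ E].
  by move: le_k1; rewrite -E.
by rewrite minn_mex2 !memE // f_mex.
Qed.

Lemma GEN_nim_min2 : minn (GEN_nim G) 2 = f set0.
Proof. by rewrite gen_nim_fuel_min2 ?sub0set // setD0. Qed.

End TruncatedNim.

Lemma expg_pair (aT bT : finGroupType) (u : aT * bT) n : u ^+ n = (u.1 ^+ n, u.2 ^+ n).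
Proof. by elim: n => [|n IHn] //; rewrite !expgS IHn. Qed.

Lemma expg_mod_card (gT : finGroupType) (G : {group gT}) x k :
  x \in G -> x ^+ k = x ^+ (k %% #|G|).
Proof. by move=> Gx; rewrite (expg_mod _ (expg_cardG Gx)). Qed.

Section CoprimeDirectProduct.
Variables (aT bT : finGroupType) (A : {group aT}) (B : {group bT}).
Hypothesis coAB : coprime #|A| #|B|.

Lemma coprime_pair_components u :
  u \in setX A B -> (u.1, 1) \in <[u]> /\ (1, u.2) \in <[u]>.
Proof.
case: u => a b /setXP[aA bB] /=.
have chiE r s : (a, b) ^+ chinese #|A| #|B| r s = (a ^+ r, b ^+ s).
  rewrite expg_pair /= (expg_mod_card (chinese _ _ _ _) aA).
  rewrite (expg_mod_card (chinese _ _ _ _) bB) chinese_modl // chinese_modr //.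
  by rewrite -!expg_mod_card.
by split; [rewrite -[(a, 1)](chiE 1%N 0%N) | rewrite -[(1, b)](chiE 0%N 1%N)];
  apply: mem_cycle.
Qed.

Lemma gen_setX_coprime (Q : {set aT * bT}) :
  Q \subset setX A B -> <<Q>> = setX <<fst @: Q>> <<snd @: Q>>.
Proof.
move=> sQAB; apply/eqP; rewrite eqEsubset; apply/andP; split.
  rewrite gen_subG; apply/subsetP => -[a b] Qab.
  by rewrite in_setX !mem_gen // (imset_f _ Qab).
have compQ u : u \in Q -> (u.1, 1) \in <<Q>> /\ (1, u.2) \in <<Q>>.
  move=> Qu; have [u1 u2] := coprime_pair_components (subsetP sQAB u Qu).
  have uQ : <[u]> \subset <<Q>> by rewrite cycle_subG mem_gen.
  by split; apply: (subsetP uQ).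
rewrite -setX_prod mul_subG //.
  rewrite -morphim_pairg1 morphim_gen ?subsetT // gen_subG morphim_pairg1.
  apply/subsetP => -[a b] /setXP[/imsetP[u Qu ->] /set1P ->].
  by case: (compQ u Qu).
rewrite -morphim_pair1g morphim_gen ?subsetT // gen_subG morphim_pair1g.
apply/subsetP => -[a b] /setXP[/set1P -> /imsetP[u Qu ->]].
by case: (compQ u Qu).
Qed.

End CoprimeDirectProduct.

Lemma eq_setX_group (aT bT : finGroupType) (A C : {group aT}) (B D : {group bT}) :
  (setX C D == setX A B) = (C :==: A) && (D :==: B).
Proof.
apply/eqP/andP => [CDAB | [/eqP -> /eqP -> //]]; split; apply/eqP/setP.
  by move=> a; have /setP/(_ (a, 1)) := CDAB; rewrite !in_setX !group1 !andbT.
by move=> b; have /setP/(_ (1, b)) := CDAB; rewrite !in_setX !group1.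
Qed.

Lemma gen_setU1_mem (gT : finGroupType) (A : {set gT}) x :
  x \in <<A>> -> <<x |: A>> = <<A>>.
Proof.
move=> xA; apply/eqP; rewrite eqEsubset gen_subG subUset sub1set xA subset_gen.
by rewrite genS // subsetUr.
Qed.

Local Notation klein := ('Z_2 * 'Z_2)%type.

Lemma card_klein : #|[set: klein]| = 4.
Proof. by rewrite cardsT card_prod card_ord. Qed.

Lemma klein_exp2 (v : klein) : v ^+ 2 = 1.
Proof.
have exp2 (a : 'Z_2) : a ^+ 2 = 1 by have := expg_cardG (in_setT a); rewrite cardsT card_ord.
by case: v => a b; rewrite expg_pair /= !exp2.
Qed.

Lemma card_klein_subgroup (A : {group klein}) : #|A| \in [:: 1; 2; 4]%N.
Proof.
have dvdA4 : #|A| %| 4 by rewrite -card_klein cardSg ?subsetT.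
by move: dvdA4 (@dvdn_leq _ 4 isT dvdA4); case: #|A| => [|[|[|[|[|n]]]]].
Qed.

Lemma odd_klein_subgroup (A : {group klein}) : odd #|A| = (A :==: 1).
Proof.
by rewrite trivg_card1; have := card_klein_subgroup A; rewrite !inE => /or3P[] /eqP ->.
Qed.

Lemma klein_gen_setU1_trivial (v : klein) (S : {set klein}) :
  S \subset [1] -> <<v |: S>> != [set: klein].
Proof.
move=> S1; have: <<v |: S>> \subset <[v]>.
  by rewrite gen_subG subUset sub1set cycle_id (subset_trans S1) ?sub1G.
apply: contraTneq => ->; rewrite subTset; apply/negP => /eqP cyc_v.
have: #[v] <= 2 by apply: dvdn_leq; rewrite // order_dvdn klein_exp2.
by rewrite orderE cyc_v card_klein.
Qed.

Lemma klein_gen_setU1 (S : {set klein}) :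
  ~~ (S \subset [1]) -> exists v, <<v |: S>> = [set: klein].
Proof.
case/subsetPn => s Ss; rewrite inE => s_neq1.
have /subsetPn[v _] : ~~ ([set: klein] \subset [set 1; s]).
  by apply/negP => /subset_leq_card; rewrite card_klein cards2; case: (_ != _).
rewrite !inE negb_or => /andP[v_neq1 v_neqs].
exists v; apply/eqP; rewrite eqEcard subsetT card_klein.
have sub3 : v |: [set 1; s] \subset <<v |: S>>.
  by rewrite !subUset !sub1set group1 !mem_gen ?setU11 // !inE Ss orbT.
have := subset_leq_card sub3.
rewrite cardsU1 cards2 !inE negb_or v_neq1 v_neqs eq_sym s_neq1 /=.
by have := card_klein_subgroup <<v |: S>>%G; rewrite !inE => /or3P[] /eqP ->.
Qed.

Lemma coprime_klein_odd (n : nat) : odd n -> coprime #|[set: klein]| n.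
Proof. by rewrite card_klein -coprime2n; apply: (coprimeXl 2). Qed.

Section KleinTimesOdd.
Variables (hT : finGroupType) (H : {group hT}).
Hypothesis oddH : odd #|H|.
Local Notation G := (setX Z2sq H).
Implicit Types (P Q : {set klein * hT}) (g : klein * hT).

Definition fst_trivial P := fst @: P \subset [1].

Definition near_gen P := [exists h in H, <<h |: snd @: P>> == H].

Definition nim2 P : nat :=
  if <<P>> == G then 0%N
  else if fst_trivial P then (if odd #|P| then (if near_gen P then 0 else 2) else 1)%N
  else (if odd #|P| then 2 else if near_gen P then 1 else 0)%N.

Lemma gen_klein_odd P : P \subset G -> <<P>> = setX <<fst @: P>> <<snd @: P>>.
Proof. exact/gen_setX_coprime/coprime_klein_odd. Qed.

Lemma gen_klein_oddE P :
  P \subset G -> (<<P>> == G) = (<<fst @: P>> == [set: klein]) && (<<snd @: P>> == H).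
Proof. by move=> sPG; rewrite gen_klein_odd // (eq_setX_group Z2sq). Qed.

Lemma snd_memH g : g \in G -> g.2 \in H.
Proof. by case: g => a b /setXP[]. Qed.

Lemma snd_subH P : P \subset G -> snd @: P \subset H.
Proof. by move=> sPG; apply/subsetP => _ /imsetP[g /(subsetP sPG) /snd_memH gH ->]. Qed.

Lemma option_sub P g : P \subset G -> g \in G :\: P -> g |: P \subset G.
Proof. by move=> sPG /setDP[gG _]; rewrite subUset sub1set gG. Qed.

Lemma odd_option P g : g \in G :\: P -> odd #|g |: P| = ~~ odd #|P|.
Proof. by case/setDP=> _ gP; rewrite cardsU1 gP. Qed.

Lemma fst_trivial_setU1 P g : fst_trivial (g |: P) = (g.1 == 1) && fst_trivial P.
Proof. by rewrite /fst_trivial imsetU1 subUset sub1set inE. Qed.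

Lemma fst_trivial_gen P g :
  P \subset G -> g \in G -> fst_trivial P -> <<g |: P>> != G.
Proof.
move=> sPG gG P1; rewrite gen_klein_oddE ?subUset ?sub1set ?gG // imsetU1.
by rewrite negb_and klein_gen_setU1_trivial.
Qed.

Lemma fst_trivial_subX1 P : P \subset G -> fst_trivial P -> P \subset setX 1 H.
Proof.
move=> sPG P1; apply/subsetP => -[a b] Pab; have /setXP[_ bH] := subsetP sPG _ Pab.
by rewrite in_setX bH andbT (subsetP P1) // (imset_f fst Pab).
Qed.

Lemma near_genS P Q : Q \subset G -> P \subset Q -> near_gen P -> near_gen Q.
Proof.
move=> sQG sPQ /exists_inP[h hH /eqP genH]; apply/exists_inP; exists h => //.
rewrite eqEsubset gen_subG subUset sub1set hH snd_subH //= -{1}genH.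
by rewrite genS // setUS // imsetS.
Qed.

Lemma near_gen_gen P : P \subset G -> <<P>> == G -> near_gen P.
Proof.
move=> sPG; rewrite gen_klein_oddE // => /andP[_ /eqP genH].
apply/exists_inP; exists 1; rewrite // eqEsubset gen_subG subUset sub1set group1 snd_subH //=.
by rewrite -{1}genH genS // subsetUr.
Qed.

Lemma near_gen_gen_setU1 P g : P \subset G -> g \in G -> <<g |: P>> == G -> near_gen P.
Proof.
move=> sPG gG; rewrite gen_klein_oddE ?subUset ?sub1set ?gG // !imsetU1 => /andP[_ genH].
by apply/exists_inP; exists g.2; first exact: snd_memH.
Qed.

Lemma near_gen_setU1 P g :
  P \subset G -> g \in G -> g.2 \in <<snd @: P>> -> near_gen (g |: P) = near_gen P.
Proof.
move=> sPG gG g2P; apply/idP/idP; last first.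
  by apply: near_genS; rewrite ?subsetUr ?subUset ?sub1set ?gG.
case/exists_inP=> h hH /eqP genH; apply/exists_inP; exists h => //.
rewrite eqEsubset gen_subG subUset sub1set hH snd_subH //= -{1}genH imsetU1.
have sPhP : <<snd @: P>> \subset <<h |: snd @: P>> by rewrite genS // subsetUr.
by rewrite setUCA (gen_setU1_mem (subsetP sPhP _ g2P)).
Qed.

Lemma snd_mem_gen P g : P \subset G -> g \in <<P>> -> g.2 \in <<snd @: P>>.
Proof. by move=> sPG; rewrite gen_klein_odd //; case: g => a b /setXP[]. Qed.

Lemma exists_option_gen P :
  P \subset G -> <<P>> != G -> ~~ fst_trivial P -> near_gen P ->
  exists2 g, g \in G :\: P & <<g |: P>> == G.
Proof.
move=> sPG nPG /klein_gen_setU1[v genV] /exists_inP[h hH genH].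
have vhG : (v, h) \in G by rewrite in_setX hH andbT.
have genvh : <<(v, h) |: P>> == G.
  by rewrite gen_klein_oddE ?subUset ?sub1set ?vhG // !imsetU1 /= genV genH eqxx.
exists (v, h) => //; rewrite inE vhG andbT.
by apply: contraNN nPG => vhP; move: genvh; rewrite (setUidPr _) ?sub1set.
Qed.

Lemma exists_option_mem_gen P :
  P \subset G -> ~~ fst_trivial P -> odd #|P| -> exists2 g, g \in G :\: P & g \in <<P>>.
Proof.
move=> sPG P1 oddP; have even_genP : ~~ odd #|<<P>>|.
  rewrite gen_klein_odd // cardsX oddM odd_klein_subgroup negb_and; apply/orP; left.
  by apply: contra P1 => /eqP genP1; rewrite /fst_trivial -genP1 subset_gen.
have /subsetPn[g genPg gP] : ~~ (<<P>> \subset P).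
  apply: contraNN even_genP => sgenP.
  by rewrite (eqP _ : <<P>> = P) // eqEsubset sgenP subset_gen.
by exists g; rewrite // inE gP (subsetP _ g genPg) // gen_subG.
Qed.

Lemma exists_option_fst1 P : ~~ (setX 1 H \subset P) -> exists2 g, g \in G :\: P & g.1 == 1.
Proof.
case/subsetPn => -[a b] /setXP[/set1P -> bH] abP.
by exists (1, b); rewrite // inE abP in_setX bH group1.
Qed.

Lemma exists_option_far P :
  P \subset G -> fst_trivial P -> ~~ near_gen P ->
  exists2 g, g \in G :\: P & ~~ fst_trivial (g |: P) && ~~ near_gen (g |: P).
Proof.
move=> sPG P1 farP; have /subsetPn[v _] : ~~ ([set: klein] \subset [1]).
  by apply/negP => /subset_leq_card; rewrite card_klein cards1.
rewrite inE => v_neq1.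
have vG : (v, 1) \in G by rewrite in_setX group1 andbT.
exists (v, 1).
  rewrite inE vG andbT; apply: contraNN v_neq1 => vP.
  by rewrite -in_set1 (subsetP P1) // (imset_f fst vP).
by rewrite fst_trivial_setU1 (negbTE v_neq1) near_gen_setU1 ?farP ?group1.
Qed.

Local Notation has_opt := (has_option (setX Z2sq H)%G nim2).

Lemma odd_nim2_neq1 Q : odd #|Q| -> nim2 Q != 1%N.
Proof. by move=> oddQ; rewrite /nim2 oddQ; do !case: ifP. Qed.

Lemma has_option1_even P : ~~ odd #|P| -> ~~ has_opt P 1.
Proof.
move=> evenP; apply/exists_inP => -[g gP /eqP nim2g1].
by have := @odd_nim2_neq1 (g |: P); rewrite (odd_option gP) evenP nim2g1 => /(_ isT).
Qed.

Section Generators.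
Variables x y : hT.
Hypotheses (xH : x \in H) (yH : y \in H) (genxy : <<[set x; y]>> = H).

Lemma near_gen_mem P : P \subset G -> x \in snd @: P -> near_gen P.
Proof.
move=> sPG xP; apply/exists_inP; exists y => //.
rewrite eqEsubset gen_subG subUset sub1set yH snd_subH //= -{1}genxy genS //.
by rewrite subUset !sub1set setU11 andbT setU1r.
Qed.

Lemma exists_option_near P :
  P \subset G -> ~~ near_gen P ->
  exists2 g, g \in G :\: P & [/\ g.1 == 1, near_gen (g |: P) & <<g |: P>> != G].
Proof.
move=> sPG farP; have xG : (1, x) \in G by rewrite in_setX group1 xH.
have xP : (1, x) \in G :\: P.
  rewrite inE xG andbT; apply: contra farP => xP.
  exact: near_gen_mem sPG (imset_f snd xP).
exists (1, x) => //; split => //.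
  by apply: near_gen_mem (option_sub sPG xP) _; rewrite imsetU1 setU11.
by apply: contra farP; apply: near_gen_gen_setU1.
Qed.

Lemma nim2_mex_fst_trivial P :
  P \subset G -> <<P>> != G -> fst_trivial P -> nim2 P = mex2 (has_opt P 0) (has_opt P 1).
Proof.
move=> sPG nPG P1; rewrite {1}/nim2 (negbTE nPG) P1.
have ngen g : g \in G :\: P -> <<g |: P>> != G.
  by case/setDP=> gG _; apply: fst_trivial_gen.
case: (boolP (odd #|P|)) => [oddP | evenP]; last first.
  rewrite (negbTE (has_option1_even evenP)) /mex2.
  case: (boolP (near_gen P)) => [nearP | farP].
    have /exists_option_fst1[g gP g1] : ~~ (setX 1 H \subset P).
      apply: contra evenP => sXP; have -> : P = setX 1 H.
        by apply/eqP; rewrite eqEsubset sXP fst_trivial_subX1.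
      by rewrite cardsX cards1 mul1n.
    rewrite (has_option_witness (k:=0) gP) // /nim2 (negbTE (ngen g gP)).
    rewrite fst_trivial_setU1 g1 P1.
    by rewrite (odd_option gP) evenP (near_genS (option_sub sPG gP) (subsetUr _ _) nearP).
  have [g gP [g1 nearg _]] := exists_option_near sPG farP.
  rewrite (has_option_witness (k:=0) gP) // /nim2 (negbTE (ngen g gP)) fst_trivial_setU1 g1 P1.
  by rewrite (odd_option gP) evenP nearg.
case: (boolP (near_gen P)) => [nearP | farP].
  suff -> : has_opt P 0 = false by [].
  apply/negbTE/exists_inP => -[g gP]; rewrite /nim2 (negbTE (ngen g gP)) (odd_option gP) oddP.
  by rewrite (near_genS (option_sub sPG gP) (subsetUr _ _) nearP); case: ifP.
have [g gP /andP[g_nontriv g_far]] := exists_option_far sPG P1 farP.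
have [g' g'P [g'1 _ _]] := exists_option_near sPG farP.
rewrite /mex2 (has_option_witness (k:=0) gP) ?(has_option_witness (k:=1) g'P) //.
  by rewrite /nim2 (negbTE (ngen g' g'P)) fst_trivial_setU1 g'1 P1 (odd_option g'P) oddP.
have ngen_g : <<g |: P>> != G by apply: contra g_far; apply: near_gen_gen; apply: option_sub.
by rewrite /nim2 (negbTE ngen_g) (negbTE g_nontriv) (odd_option gP) oddP (negbTE g_far).
Qed.

Lemma nim2_mex_fst_nontrivial P :
  P \subset G -> <<P>> != G -> ~~ fst_trivial P ->
  nim2 P = mex2 (has_opt P 0) (has_opt P 1).
Proof.
move=> sPG nPG P1; rewrite {1}/nim2 (negbTE nPG) (negbTE P1).
have nontriv g : fst_trivial (g |: P) = false by rewrite fst_trivial_setU1 (negbTE P1) andbF.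
have near_mem g : g \in <<P>> -> near_gen (g |: P) = near_gen P.
  move=> gP; apply: near_gen_setU1 (snd_mem_gen sPG gP) => //.
  by apply: subsetP gP; rewrite gen_subG.
case: (boolP (near_gen P)) => [nearP | farP].
  have [g gP gen_g] := exists_option_gen sPG nPG P1 nearP.
  rewrite (has_option_witness (k:=0) gP); last by rewrite /nim2 gen_g.
  case: (boolP (odd #|P|)) => [oddP | evenP].
    2: by rewrite (negbTE (has_option1_even evenP)).
  have [g' g'P g'_genP] := exists_option_mem_gen sPG P1 oddP.
  rewrite (has_option_witness (k:=1) g'P) // /nim2 gen_setU1_mem // (negbTE nPG) nontriv.
  by rewrite (odd_option g'P) oddP near_mem ?nearP.
case: (boolP (odd #|P|)) => [oddP | evenP].
  have [g gP g_genP] := exists_option_mem_gen sPG P1 oddP.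
  have [g' g'P [_ nearg' ngen']] := exists_option_near sPG farP.
  rewrite /mex2 (has_option_witness (k:=0) gP) ?(has_option_witness (k:=1) g'P) //.
    by rewrite /nim2 (negbTE ngen') nontriv (odd_option g'P) oddP nearg'.
  rewrite /nim2 gen_setU1_mem // (negbTE nPG) nontriv (odd_option gP) oddP.
  by rewrite near_mem ?(negbTE farP).
rewrite (negbTE (has_option1_even evenP)) /mex2.
suff -> : has_opt P 0 = false by [].
apply/negbTE/exists_inP => -[g gP]; have /setDP[gG _] := gP.
have ngen : <<g |: P>> != G by apply: contra farP; apply: near_gen_gen_setU1.
by rewrite /nim2 (negbTE ngen) nontriv (odd_option gP) evenP.
Qed.

Lemma GEN_nim_klein_odd : minn (GEN_nim (setX Z2sq H)%G) 2 = 1%N.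
Proof.
rewrite (GEN_nim_min2 (f := nim2)); first last.
- by move=> P sPG nPG; case: (boolP (fst_trivial P)) => P1;
    [apply: nim2_mex_fst_trivial | apply: nim2_mex_fst_nontrivial].
- by move=> P genP; rewrite /nim2 genP eqxx.
have klein_nontrivial : (1 : {set klein}) != [set: klein].
  by apply/eqP => klein1; have := card_klein; rewrite -klein1 cards1.
rewrite /nim2 gen_klein_oddE ?sub0set // !imset0 !gen0 (negbTE klein_nontrivial).
by rewrite /fst_trivial imset0 sub0set cards0.
Qed.

End Generators.

End KleinTimesOdd.

Lemma dgen2_gen_pair (gT : finGroupType) (H : {group gT}) :
  dgen H = 2 -> exists x y, [/\ x \in H, y \in H & <<[set x; y]>> = H].
Proof.
rewrite /dgen; case: arg_minnP => [|A /andP[sAH /eqP genA] _].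
  by rewrite subxx genGid eqxx.
move/eqP/cards2P => -[x [y [_ Axy]]]; exists x, y.
by rewrite -Axy genA; split => //; apply: (subsetP sAH); rewrite Axy !inE eqxx ?orbT.
Qed.

Close Scope group_scope.

Theorem proposition4p11 (hT : finGroupType) (H : {group hT}) :
  odd #|H| -> dgen H = 2 -> GEN_nim (setX Z2sq H)%G = 1.
Proof.
move=> oddH /dgen2_gen_pair[x [y [xH yH genxy]]].
by have := GEN_nim_klein_odd oddH xH yH genxy; case: (GEN_nim _) => [|[|n]].
Qed.
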